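(* Let $\varrho\in C(\mathbb{C};\mathbb{C})$ be real differentiable in $z_0\in\mathbb{C}$ with $(\partial_{\mathrm{wirt}}\varrho(z_0),\overline{\partial}_{\mathrm{wirt}}\varrho(z_0))\neq(0,0)$, let $K\subseteq\mathbb{C}$ be compact and $\varepsilon>0$. (i) If $\partial_{\mathrm{wirt}}\varrho(z_0)\neq0$ and $\overline{\partial}_{\mathrm{wirt}}\varrho(z_0)=0$, there are $\mathbb{C}$-affine maps $\phi,\psi:\mathbb{C}\to\mathbb{C}$ with $\sup_{z\in K}|(\psi\circ\varrho\circ\phi)(z)-z|<\varepsilon$. (ii) If $\partial_{\mathrm{wirt}}\varrho(z_0)=0$ and $\overline{\partial}_{\mathrm{wirt}}\varrho(z_0)\neq0$, there are $\mathbb{C}$-affine maps $\phi,\psi:\mathbb{C}\to\mathbb{C}$ with $\sup_{z\in K}|(\psi\circ\varrho\circ\phi)(z)-\overline{z}|<\varepsilon$. (iii) If $\partial_{\mathrm{wirt}}\varrho(z_0)\neq0\neq\overline{\partial}_{\mathrm{wirt}}\varrho(z_0)$, there are $\mathbb{C}$-affine maps $\phi:\mathbb{C}\to\mathbb{C}^2$ and $\psi:\mathbb{C}^2\to\mathbb{C}^2$ with $\sup_{z\in K}\|(\psi\circ\varrho^{\times2}\circ\phi)(z)-(z,\overline{z})\|_{\mathbb{C}^2}<\varepsilon$.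
   Context: Wirtinger derivatives: $\partial_{\mathrm{wirt}}\varrho=\frac12\left(\frac{\partial\varrho}{\partial x}-\mathrm{i}\frac{\partial\varrho}{\partial y}\right)$, $\overline{\partial}_{\mathrm{wirt}}\varrho=\frac12\left(\frac{\partial\varrho}{\partial x}+\mathrm{i}\frac{\partial\varrho}{\partial y}\right)$. $\varrho$ is real differentiable at $z_0$ if the partial derivatives exist at $z_0$ and $\lim_{h\to0}\frac{\varrho(z_0+h)-\varrho(z_0)-\frac{\partial\varrho}{\partial x}(z_0)\mathrm{Re}(h)-\frac{\partial\varrho}{\partial y}(z_0)\mathrm{Im}(h)}{h}=0$. A map $\mathbb{C}^a\to\mathbb{C}^b$ is $\mathbb{C}$-affine if it has the form $z\mapsto Az+b$ with complex $A,b$. $\varrho^{\times2}(z_1,z_2)=(\varrho(z_1),\varrho(z_2))$. *)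

From Stdlib Require Import Reals List.
From Coquelicot Require Import Coquelicot.
Open Scope R_scope.
Open Scope C_scope.

Definition has_partial_x (rho : C -> C) (z0 d : C) : Prop :=
  forall eps : R, 0 < eps -> exists delta : R, 0 < delta /\
    forall t : R, t <> 0 -> Rabs t < delta ->
      Cmod ((rho (z0 + RtoC t) - rho z0) / RtoC t - d) < eps.

Definition has_partial_y (rho : C -> C) (z0 d : C) : Prop :=
  forall eps : R, 0 < eps -> exists delta : R, 0 < delta /\
    forall t : R, t <> 0 -> Rabs t < delta ->
      Cmod ((rho (z0 + Ci * RtoC t) - rho z0) / RtoC t - d) < eps.

Definition real_diff_with (rho : C -> C) (z0 dx dy : C) : Prop :=
  has_partial_x rho z0 dx /\ has_partial_y rho z0 dy /\
  forall eps : R, 0 < eps -> exists delta : R, 0 < delta /\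
    forall h : C, h <> 0 -> Cmod h < delta ->
      Cmod ((rho (z0 + h) - rho z0 - dx * RtoC (Re h) - dy * RtoC (Im h)) / h) < eps.

Definition wirt (dx dy : C) : C := (dx - Ci * dy) / 2.
Definition wirt_bar (dx dy : C) : C := (dx + Ci * dy) / 2.

Definition compactC (K : C -> Prop) : Prop :=
  forall (I : Type) (U : I -> C -> Prop),
    (forall i, @open C_UniformSpace (U i)) ->
    (forall z, K z -> exists i, U i z) ->
    exists l : list I, forall z, K z -> exists i, In i l /\ U i z.

Definition affine11 (f : C -> C) : Prop :=
  exists a b : C, forall z, f z = a * z + b.
Definition affine12 (f : C -> C * C) : Prop :=
  exists a1 a2 b1 b2 : C, forall z, f z = (a1 * z + b1, a2 * z + b2).
Definition affine22 (f : C * C -> C * C) : Prop :=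
  exists a11 a12 a21 a22 b1 b2 : C, forall w,
    f w = (a11 * fst w + a12 * snd w + b1, a21 * fst w + a22 * snd w + b2).

Definition norm2 (w : C * C) : R := sqrt (Cmod (fst w) ^ 2 + Cmod (snd w) ^ 2).

Definition prod2 (rho : C -> C) (w : C * C) : C * C := (rho (fst w), rho (snd w)).

Definition sup_lt (K : C -> Prop) (g : C -> R) (eps : R) : Prop :=
  exists s : R, s < eps /\ forall z, K z -> g z <= s.

From Stdlib Require Import Reals List Lra.
From Coquelicot Require Import Coquelicot.
Open Scope R_scope.
Open Scope C_scope.

(* Real differentiability at z0 means that rho (z0 + h) - rho z0 is the
   R-linear map h |-> a h + b conj h, with a and b the Wirtinger derivatives,
   up to an error o(|h|).  Precomposing rho with z |-> z0 + d z for a small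
   d > 0 and postcomposing with an affine map that divides by d therefore
   approximates that linear map uniformly on the bounded set K.  If b = 0 or
   a = 0 this isolates z or conj z.  If both are nonzero, evaluating at z and
   at i z and forming rho (z0 + d z) -/+ i rho (z0 + i d z) separates the two
   parts, since (a h + b conj h) -/+ i (a (i h) + b conj (i h)) equals 2 a h,
   resp. 2 b conj h. *)

Lemma open_Cmod_lt (r : R) : @open C_UniformSpace (fun z => Cmod z < r).
Proof.
  exact (open_comp Cmod (fun u => u < r) (fun z _ => filterlim_norm z) (open_lt r)).
Qed.

Lemma compactC_bounded (K : C -> Prop) :
  compactC K -> exists M, 0 <= M /\ forall z, K z -> Cmod z <= M.
Proof.
  intros HK.
  destruct (HK nat (fun n z => Cmod z < INR n)) as [l Hl].
  - intros n. apply open_Cmod_lt.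
  - intros z _. destruct (INR_unbounded (Cmod z)) as [n Hn]. exists n. exact Hn.
  - exists (INR (list_max l)). split; [apply pos_INR|].
    intros z Hz. destruct (Hl z Hz) as [n [Hn Hzn]].
    assert (Hmax : (n <= list_max l)%nat).
    { exact (proj1 (Forall_forall _ l) (proj1 (list_max_le l _) (le_n _)) n Hn). }
    apply le_INR in Hmax. lra.
Qed.

Ltac C_field :=
  apply injective_projections; simpl;
  unfold Cdiv, Cinv, Cmult, Cplus, Cminus, Copp, Ci, Cconj, RtoC; simpl; field.

Definition wirt_lin (dx dy h : C) : C := wirt dx dy * h + wirt_bar dx dy * Cconj h.

Lemma wirt_lin_partials (dx dy h : C) :
  dx * RtoC (Re h) + dy * RtoC (Im h) = wirt_lin dx dy h.
Proof. destruct dx, dy, h. unfold wirt_lin, wirt, wirt_bar. C_field. Qed.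

Lemma wirt_lin_scal (dx dy : C) (d : R) (h : C) :
  wirt_lin dx dy (RtoC d * h) = RtoC d * wirt_lin dx dy h.
Proof. destruct dx, dy, h. unfold wirt_lin, wirt, wirt_bar. C_field. Qed.

Lemma wirt_lin_sub_rot (dx dy h : C) :
  wirt_lin dx dy h - Ci * wirt_lin dx dy (Ci * h) = 2 * wirt dx dy * h.
Proof. destruct dx, dy, h. unfold wirt_lin, wirt, wirt_bar. C_field. Qed.

Lemma wirt_lin_add_rot (dx dy h : C) :
  wirt_lin dx dy h + Ci * wirt_lin dx dy (Ci * h) = 2 * wirt_bar dx dy * Cconj h.
Proof. destruct dx, dy, h. unfold wirt_lin, wirt, wirt_bar. C_field. Qed.

Lemma real_diff_little_o (rho : C -> C) (z0 dx dy : C) :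
  real_diff_with rho z0 dx dy ->
  forall eta, 0 < eta -> exists delta, 0 < delta /\ forall h, Cmod h < delta ->
    Cmod (rho (z0 + h) - rho z0 - wirt_lin dx dy h) <= eta * Cmod h.
Proof.
  intros [_ [_ Hd]] eta Heta.
  destruct (Hd eta Heta) as [delta [Hdelta Hh]].
  exists delta. split; [exact Hdelta|]. intros h Hhd.
  destruct (Ceq_dec h 0) as [->|Hh0].
  - replace (rho (z0 + 0) - rho z0 - wirt_lin dx dy 0) with (RtoC 0)
      by (rewrite Cplus_0_r; unfold wirt_lin; C_field).
    rewrite !Cmod_0. lra.
  - specialize (Hh h Hh0 Hhd).
    assert (Hhpos : 0 < Cmod h) by (apply Cmod_gt_0; exact Hh0).
    rewrite Cmod_div, Rlt_div_l in Hh by assumption.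
    rewrite <- wirt_lin_partials.
    replace (rho (z0 + h) - rho z0 - (dx * Re h + dy * Im h))
      with (rho (z0 + h) - rho z0 - dx * Re h - dy * Im h) by ring.
    lra.
Qed.

Lemma real_diff_rescaled (rho : C -> C) (z0 dx dy : C) (M eta : R) :
  real_diff_with rho z0 dx dy -> 0 <= M -> 0 < eta ->
  exists d, 0 < d /\ forall w, Cmod w <= M ->
    Cmod (rho (z0 + RtoC d * w) - rho z0 - RtoC d * wirt_lin dx dy w) <= eta * d.
Proof.
  intros Hd HM Heta.
  destruct (real_diff_little_o rho z0 dx dy Hd (eta / (M + 1)))
    as [delta [Hdelta Ho]]; [apply Rdiv_lt_0_compat; lra|].
  set (d := (delta / (M + 1))%R).
  assert (Hdelta_d : delta = (d * (M + 1))%R) by (unfold d; field; lra).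
  assert (Hdpos : 0 < d) by (unfold d; apply Rdiv_lt_0_compat; lra).
  exists d. split; [exact Hdpos|]. intros w Hw.
  assert (Hdw : Cmod (RtoC d * w) = (d * Cmod w)%R)
    by (rewrite Cmod_mult, Cmod_R, Rabs_pos_eq; lra).
  rewrite <- wirt_lin_scal.
  eapply Rle_trans; [apply Ho; rewrite Hdw; nra|].
  rewrite Hdw. replace (eta * d)%R with (eta / (M + 1) * (d * (M + 1)))%R by (field; lra).
  apply Rmult_le_compat_l; [apply Rlt_le, Rdiv_lt_0_compat; lra | nra].
Qed.

Lemma Cmod_sub_div_le (X c t : C) (d k : R) : c <> 0 -> 0 < d ->
  Cmod (X - c * RtoC d * t) <= k * d -> Cmod (X / (c * RtoC d) - t) <= k / Cmod c.
Proof.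
  intros Hc Hd HX.
  assert (Hcpos : 0 < Cmod c) by (apply Cmod_gt_0; exact Hc).
  assert (Hd0 : RtoC d <> 0) by (intros E; injection E; lra).
  replace (X / (c * RtoC d) - t) with ((X - c * RtoC d * t) / (c * RtoC d))
    by (field; split; assumption).
  rewrite Cmod_div, Cmod_mult, Cmod_R, Rabs_pos_eq by (try apply Cmult_neq_0; auto; lra).
  apply Rmult_le_reg_r with (Cmod c * d)%R; [nra|].
  replace (Cmod (X - c * RtoC d * t) / (Cmod c * d) * (Cmod c * d))%R
    with (Cmod (X - c * RtoC d * t)) by (field; lra).
  replace (k / Cmod c * (Cmod c * d))%R with (k * d)%R by (field; lra).
  exact HX.
Qed.

Lemma Cmod_add_unit_mul_le (u x y : C) : Cmod u = 1 -> Cmod (x + u * y) <= Cmod x + Cmod y.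
Proof.
  intros Hu. eapply Rle_trans; [apply Cmod_triangle|].
  rewrite Cmod_mult, Hu. lra.
Qed.

Lemma norm2_le (x y : C) : norm2 (x, y) <= Cmod x + Cmod y.
Proof.
  unfold norm2; simpl.
  pose proof (Cmod_ge_0 x). pose proof (Cmod_ge_0 y).
  rewrite <- (sqrt_square (Cmod x + Cmod y)) by lra.
  apply sqrt_le_1; nra.
Qed.

Lemma affine_single_approx (rho : C -> C) (z0 dx dy : C) (K : C -> Prop) (eps : R)
    (c : C) (T : C -> C) :
  real_diff_with rho z0 dx dy -> compactC K -> 0 < eps -> c <> 0 ->
  (forall w, wirt_lin dx dy w = c * T w) ->
  exists phi psi : C -> C, affine11 phi /\ affine11 psi /\
    sup_lt K (fun z => Cmod (psi (rho (phi z)) - T z)) eps.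
Proof.
  intros Hd HK Heps Hc HT.
  destruct (compactC_bounded K HK) as [M [HM HKM]].
  assert (Hcpos : 0 < Cmod c) by (apply Cmod_gt_0; exact Hc).
  destruct (real_diff_rescaled rho z0 dx dy M (eps * Cmod c / 2) Hd HM)
    as [d [Hdpos Hlin]]; [nra|].
  exists (fun z => z0 + RtoC d * z), (fun w => (w - rho z0) / (c * RtoC d)).
  split; [exists (RtoC d), z0; intros z; ring|].
  split; [exists (/ (c * RtoC d)), (- rho z0 / (c * RtoC d)); intros w; unfold Cdiv; ring|].
  exists (eps / 2)%R. split; [lra|]. intros z Hz.
  eapply Rle_trans.
  - apply Cmod_sub_div_le; [exact Hc | exact Hdpos |].
    replace (c * RtoC d * T z) with (RtoC d * wirt_lin dx dy z) by (rewrite HT; ring).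
    apply Hlin, HKM, Hz.
  - right. field. lra.
Qed.

Lemma wirt_rot_combinations (dx dy p1 p2 r0 : C) (d : R) (h : C) :
  let E1 := p1 - r0 - RtoC d * wirt_lin dx dy h in
  let E2 := p2 - r0 - RtoC d * wirt_lin dx dy (Ci * h) in
  p1 - Ci * p2 - (1 - Ci) * r0 - 2 * wirt dx dy * RtoC d * h = E1 + (- Ci) * E2 /\
  p1 + Ci * p2 - (1 + Ci) * r0 - 2 * wirt_bar dx dy * RtoC d * Cconj h = E1 + Ci * E2.
Proof.
  intros E1 E2. unfold E1, E2. split.
  - replace (2 * wirt dx dy * RtoC d * h) with (RtoC d * (2 * wirt dx dy * h)) by ring.
    rewrite <- wirt_lin_sub_rot. ring.
  - replace (2 * wirt_bar dx dy * RtoC d * Cconj h)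
      with (RtoC d * (2 * wirt_bar dx dy * Cconj h)) by ring.
    rewrite <- wirt_lin_add_rot. ring.
Qed.

Lemma affine_pair_approx (rho : C -> C) (z0 dx dy : C) (K : C -> Prop) (eps : R) :
  real_diff_with rho z0 dx dy -> compactC K -> 0 < eps ->
  wirt dx dy <> 0 -> wirt_bar dx dy <> 0 ->
  exists (phi : C -> C * C) (psi : C * C -> C * C), affine12 phi /\ affine22 psi /\
    sup_lt K (fun z => norm2 ((fst (psi (prod2 rho (phi z))) - z,
                               snd (psi (prod2 rho (phi z))) - Cconj z))) eps.
Proof.
  intros Hd HK Heps Ha Hb.
  destruct (compactC_bounded K HK) as [M [HM HKM]].
  assert (H2a : 2 * wirt dx dy <> 0) by (apply Cmult_neq_0; [intros E; injection E; lra | exact Ha]).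
  assert (H2b : 2 * wirt_bar dx dy <> 0)
    by (apply Cmult_neq_0; [intros E; injection E; lra | exact Hb]).
  assert (Hapos : 0 < Cmod (wirt dx dy)) by (apply Cmod_gt_0; exact Ha).
  assert (Hbpos : 0 < Cmod (wirt_bar dx dy)) by (apply Cmod_gt_0; exact Hb).
  assert (Hinv : 0 < / Cmod (wirt dx dy) + / Cmod (wirt_bar dx dy))
    by (pose proof (Rinv_0_lt_compat _ Hapos); pose proof (Rinv_0_lt_compat _ Hbpos); lra).
  set (eta := (eps / (2 * (/ Cmod (wirt dx dy) + / Cmod (wirt_bar dx dy))))%R).
  destruct (real_diff_rescaled rho z0 dx dy M eta Hd HM) as [d [Hdpos Hlin]];
    [apply Rdiv_lt_0_compat; lra|].
  set (D1 := 2 * wirt dx dy * RtoC d). set (D2 := 2 * wirt_bar dx dy * RtoC d).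
  set (r0 := rho z0) in Hlin |- *.
  exists (fun z => (z0 + RtoC d * z, z0 + RtoC d * (Ci * z))).
  exists (fun w => ((fst w - Ci * snd w - (1 - Ci) * r0) / D1,
                    (fst w + Ci * snd w - (1 + Ci) * r0) / D2)).
  split; [exists (RtoC d), (RtoC d * Ci), z0, z0; intros z; f_equal; ring|].
  split.
  { exists (/ D1), (- Ci / D1), (/ D2), (Ci / D2),
      (- ((1 - Ci) * r0) / D1), (- ((1 + Ci) * r0) / D2).
    intros w. unfold Cdiv. f_equal; ring. }
  exists (eps / 2)%R. split; [lra|]. intros z Hz. unfold prod2; simpl.
  destruct (wirt_rot_combinations dx dy (rho (z0 + RtoC d * z))
              (rho (z0 + RtoC d * (Ci * z))) r0 d z) as [Hsub Hadd].
  set (E1 := rho (z0 + RtoC d * z) - r0 - RtoC d * wirt_lin dx dy z) in Hsub, Hadd.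
  set (E2 := rho (z0 + RtoC d * (Ci * z)) - r0 - RtoC d * wirt_lin dx dy (Ci * z))
    in Hsub, Hadd.
  assert (HE : Cmod E1 + Cmod E2 <= 2 * eta * d).
  { pose proof (Hlin z (HKM z Hz)).
    pose proof (Hlin (Ci * z) ltac:(rewrite Cmod_mult, Cmod_Ci, Rmult_1_l; apply HKM, Hz)).
    unfold E1, E2. lra. }
  eapply Rle_trans; [apply norm2_le|].
  apply Rle_trans
    with (2 * eta / Cmod (2 * wirt dx dy) + 2 * eta / Cmod (2 * wirt_bar dx dy))%R.
  - apply Rplus_le_compat; apply Cmod_sub_div_le; auto.
    + rewrite Hsub. eapply Rle_trans; [|exact HE].
      apply Cmod_add_unit_mul_le. rewrite Cmod_opp. apply Cmod_Ci.
    + rewrite Hadd. eapply Rle_trans; [|exact HE].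
      apply Cmod_add_unit_mul_le, Cmod_Ci.
  - rewrite !Cmod_mult, Cmod_R, Rabs_pos_eq by lra.
    right. unfold eta. field. lra.
Qed.

Theorem proposition3p1 (rho : C -> C) (z0 dx dy : C) (K : C -> Prop) (eps : R) :
  (forall z : C, continuous rho z) ->
  real_diff_with rho z0 dx dy ->
  (wirt dx dy, wirt_bar dx dy) <> (RtoC 0, RtoC 0) ->
  compactC K -> 0 < eps ->
  (wirt dx dy <> 0 -> wirt_bar dx dy = 0 ->
     exists phi psi : C -> C, affine11 phi /\ affine11 psi /\
       sup_lt K (fun z => Cmod (psi (rho (phi z)) - z)) eps) /\
  (wirt dx dy = 0 -> wirt_bar dx dy <> 0 ->
     exists phi psi : C -> C, affine11 phi /\ affine11 psi /\
       sup_lt K (fun z => Cmod (psi (rho (phi z)) - Cconj z)) eps) /\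
  (wirt dx dy <> 0 -> wirt_bar dx dy <> 0 ->
     exists (phi : C -> C * C) (psi : C * C -> C * C), affine12 phi /\ affine22 psi /\
       sup_lt K (fun z => norm2 ((fst (psi (prod2 rho (phi z))) - z,
                                  snd (psi (prod2 rho (phi z))) - Cconj z))) eps).
Proof.
  intros _ Hd _ HK Heps.
  split; [|split].
  - intros Ha Hb.
    apply (affine_single_approx rho z0 dx dy K eps (wirt dx dy) (fun w => w));
      auto.
    intros w. unfold wirt_lin. rewrite Hb. ring.
  - intros Ha Hb.
    apply (affine_single_approx rho z0 dx dy K eps (wirt_bar dx dy) Cconj); auto.
    intros w. unfold wirt_lin. rewrite Ha. ring.
  - exact (affine_pair_approx rho z0 dx dy K eps Hd HK Heps).
Qed.
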